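(* Let $\Bbbk$ be a field and $M$ a generalized Coxeter matrix. Let $\widetilde{NC}(M)$ be the $\Bbbk$-algebra generated by $\{T_i : i \in I\}$ and an extra generator $T_\infty$, subject to the braid relations of $M$ among the $T_i$ and the relations $T_i^{m_{ii}} = T_iT_\infty = T_\infty T_i = T_\infty^2 = T_\infty$ for all $i \in I$. Then $\Bbbk T_\infty$ is a two-sided ideal with $\widetilde{NC}(M)/\Bbbk T_\infty \cong NC(M)$, and there is a unique bialgebra structure on $\widetilde{NC}(M)$ in which all $T_i$ and $T_\infty$ are grouplike, namely $\widetilde{\Delta}(T_i) = T_i \otimes T_i$, $\widetilde{\Delta}(T_\infty) = T_\infty\otimes T_\infty$, $\widetilde{\varepsilon}(T_i) = \widetilde{\varepsilon}(T_\infty) = 1$.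
   Context: A generalized Coxeter matrix is a symmetric matrix $M = (m_{ij})_{i,j\in I}$, $I$ finite, with $m_{ij}\in\{2,3,\dots\}\cup\{\infty\}$ for $i\ne j$ and finite $m_{ii}\ge 2$; the braid relations are $\underbrace{T_iT_jT_i\cdots}_{m_{ij}} = \underbrace{T_jT_iT_j\cdots}_{m_{ij}}$ for $i\ne j$ with $m_{ij}<\infty$, and $NC(M)$ is $\Bbbk\langle T_i\rangle$ modulo the braid relations and $T_i^{m_{ii}}=0$. An element $g$ is grouplike if $\Delta(g) = g\otimes g$ and $\varepsilon(g)=1$. *)

(* Presented k-algebras, their tensor squares/cubes and
   bialgebra structures are modelled as setoids over syntax trees, since
   MathComp has neither free algebras nor tensor products of algebras. *)
From HB Require Import structures.
From mathcomp Require Import all_boot all_order all_algebra.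
Set Implicit Arguments. Unset Strict Implicit. Unset Printing Implicit Defensive.
Import GRing.Theory.
Local Open Scope ring_scope.

(* ---------- generalized Coxeter matrices; None encodes infinity ---------- *)
Definition gen_coxeter (I : finType) (m : I -> I -> option nat) : Prop :=
  (forall i j, m i j = m j i) /\
  (forall i j, i != j -> forall n, m i j = Some n -> (2 <= n)%N) /\
  (forall i, exists2 n, m i i = Some n & (2 <= n)%N).

Section Presented.
Variables (k : fieldType) (X : Type).

Inductive fexpr : Type :=
 | FC of k | FV of X | FAdd of fexpr & fexpr | FMul of fexpr & fexpr.

Fixpoint fpow (a : fexpr) (n : nat) : fexpr :=
  if n is n'.+1 then FMul a (fpow a n') else FC 1.

Fixpoint braidw (a b : fexpr) (n : nat) : fexpr :=
  if n is n'.+1 then FMul a (braidw b a n') else FC 1.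

(* the congruence of k<X> generated by the k-algebra axioms (k central via FC)
   and the relations R: the quotient is k<X>/(R) *)
Inductive alg_eqv (R : fexpr -> fexpr -> Prop) : fexpr -> fexpr -> Prop :=
 | ae_rel a b : R a b -> alg_eqv R a b
 | ae_refl a : alg_eqv R a a
 | ae_sym a b : alg_eqv R a b -> alg_eqv R b a
 | ae_trans a b c : alg_eqv R a b -> alg_eqv R b c -> alg_eqv R a c
 | ae_add a a' b b' : alg_eqv R a a' -> alg_eqv R b b' ->
     alg_eqv R (FAdd a b) (FAdd a' b')
 | ae_mul a a' b b' : alg_eqv R a a' -> alg_eqv R b b' ->
     alg_eqv R (FMul a b) (FMul a' b')
 | ae_addA a b c : alg_eqv R (FAdd (FAdd a b) c) (FAdd a (FAdd b c))
 | ae_addC a b : alg_eqv R (FAdd a b) (FAdd b a)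
 | ae_add0 a : alg_eqv R (FAdd (FC 0) a) a
 | ae_addN a : alg_eqv R (FAdd (FMul (FC (-1)) a) a) (FC 0)
 | ae_mulA a b c : alg_eqv R (FMul (FMul a b) c) (FMul a (FMul b c))
 | ae_mul1l a : alg_eqv R (FMul (FC 1) a) a
 | ae_mul1r a : alg_eqv R (FMul a (FC 1)) a
 | ae_mulDl a b c : alg_eqv R (FMul (FAdd a b) c) (FAdd (FMul a c) (FMul b c))
 | ae_mulDr a b c : alg_eqv R (FMul a (FAdd b c)) (FAdd (FMul a b) (FMul a c))
 | ae_Cadd x y : alg_eqv R (FC (x + y)) (FAdd (FC x) (FC y))
 | ae_Cmul x y : alg_eqv R (FC (x * y)) (FMul (FC x) (FC y))
 | ae_Ccomm x a : alg_eqv R (FMul (FC x) a) (FMul a (FC x)).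

(* ---------- tensor square A (x) A of a setoid algebra (fexpr, eA) ---------- *)
Inductive texpr : Type :=
 | TT of fexpr & fexpr | TAdd of texpr & texpr | TScale of k & texpr.

Inductive t_eqv (eA : fexpr -> fexpr -> Prop) : texpr -> texpr -> Prop :=
 | te_refl s : t_eqv eA s s
 | te_sym s t : t_eqv eA s t -> t_eqv eA t s
 | te_trans s t u : t_eqv eA s t -> t_eqv eA t u -> t_eqv eA s u
 | te_add s s' t t' : t_eqv eA s s' -> t_eqv eA t t' ->
     t_eqv eA (TAdd s t) (TAdd s' t')
 | te_scale c s s' : t_eqv eA s s' -> t_eqv eA (TScale c s) (TScale c s')
 | te_TT a a' b b' : eA a a' -> eA b b' -> t_eqv eA (TT a b) (TT a' b')
 | te_addA s t u : t_eqv eA (TAdd (TAdd s t) u) (TAdd s (TAdd t u))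
 | te_addC s t : t_eqv eA (TAdd s t) (TAdd t s)
 | te_add0 s t : t_eqv eA (TAdd (TScale 0 s) t) t
 | te_scale1 s : t_eqv eA (TScale 1 s) s
 | te_scaleM x y s : t_eqv eA (TScale x (TScale y s)) (TScale (x * y) s)
 | te_scaleDl x y s : t_eqv eA (TScale (x + y) s) (TAdd (TScale x s) (TScale y s))
 | te_scaleDr x s t : t_eqv eA (TScale x (TAdd s t)) (TAdd (TScale x s) (TScale x t))
 | te_linDl a1 a2 b : t_eqv eA (TT (FAdd a1 a2) b) (TAdd (TT a1 b) (TT a2 b))
 | te_linDr a b1 b2 : t_eqv eA (TT a (FAdd b1 b2)) (TAdd (TT a b1) (TT a b2))
 | te_linZl c a b : t_eqv eA (TT (FMul (FC c) a) b) (TScale c (TT a b))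
 | te_linZr c a b : t_eqv eA (TT a (FMul (FC c) b)) (TScale c (TT a b)).

Fixpoint tmul_pure (a b : fexpr) (t : texpr) : texpr :=
  match t with
  | TT c d => TT (FMul a c) (FMul b d)
  | TAdd s u => TAdd (tmul_pure a b s) (tmul_pure a b u)
  | TScale x s => TScale x (tmul_pure a b s)
  end.
Fixpoint tmul (s t : texpr) : texpr :=
  match s with
  | TT a b => tmul_pure a b t
  | TAdd s1 s2 => TAdd (tmul s1 t) (tmul s2 t)
  | TScale x s1 => TScale x (tmul s1 t)
  end.
Definition tone : texpr := TT (FC 1) (FC 1).

Inductive t3expr : Type :=
 | T3 of fexpr & fexpr & fexpr | T3Add of t3expr & t3expr | T3Scale of k & t3expr.

Inductive t3_eqv (eA : fexpr -> fexpr -> Prop) : t3expr -> t3expr -> Prop :=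
 | t3e_refl s : t3_eqv eA s s
 | t3e_sym s t : t3_eqv eA s t -> t3_eqv eA t s
 | t3e_trans s t u : t3_eqv eA s t -> t3_eqv eA t u -> t3_eqv eA s u
 | t3e_add s s' t t' : t3_eqv eA s s' -> t3_eqv eA t t' ->
     t3_eqv eA (T3Add s t) (T3Add s' t')
 | t3e_scale c s s' : t3_eqv eA s s' -> t3_eqv eA (T3Scale c s) (T3Scale c s')
 | t3e_T3 a a' b b' c c' : eA a a' -> eA b b' -> eA c c' ->
     t3_eqv eA (T3 a b c) (T3 a' b' c')
 | t3e_addA s t u : t3_eqv eA (T3Add (T3Add s t) u) (T3Add s (T3Add t u))
 | t3e_addC s t : t3_eqv eA (T3Add s t) (T3Add t s)
 | t3e_add0 s t : t3_eqv eA (T3Add (T3Scale 0 s) t) t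
 | t3e_scale1 s : t3_eqv eA (T3Scale 1 s) s
 | t3e_scaleM x y s : t3_eqv eA (T3Scale x (T3Scale y s)) (T3Scale (x * y) s)
 | t3e_scaleDl x y s :
     t3_eqv eA (T3Scale (x + y) s) (T3Add (T3Scale x s) (T3Scale y s))
 | t3e_scaleDr x s t :
     t3_eqv eA (T3Scale x (T3Add s t)) (T3Add (T3Scale x s) (T3Scale x t))
 | t3e_lin1D a1 a2 b c :
     t3_eqv eA (T3 (FAdd a1 a2) b c) (T3Add (T3 a1 b c) (T3 a2 b c))
 | t3e_lin2D a b1 b2 c :
     t3_eqv eA (T3 a (FAdd b1 b2) c) (T3Add (T3 a b1 c) (T3 a b2 c))
 | t3e_lin3D a b c1 c2 :
     t3_eqv eA (T3 a b (FAdd c1 c2)) (T3Add (T3 a b c1) (T3 a b c2))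
 | t3e_lin1Z x a b c : t3_eqv eA (T3 (FMul (FC x) a) b c) (T3Scale x (T3 a b c))
 | t3e_lin2Z x a b c : t3_eqv eA (T3 a (FMul (FC x) b) c) (T3Scale x (T3 a b c))
 | t3e_lin3Z x a b c : t3_eqv eA (T3 a b (FMul (FC x) c)) (T3Scale x (T3 a b c)).

Fixpoint t_append (t : texpr) (c : fexpr) : t3expr :=
  match t with
  | TT x y => T3 x y c
  | TAdd s u => T3Add (t_append s c) (t_append u c)
  | TScale z s => T3Scale z (t_append s c)
  end.
Fixpoint t_prepend (a : fexpr) (t : texpr) : t3expr :=
  match t with
  | TT x y => T3 a x y
  | TAdd s u => T3Add (t_prepend a s) (t_prepend a u)
  | TScale z s => T3Scale z (t_prepend a s)
  end.
Fixpoint t_Dl (D : fexpr -> texpr) (t : texpr) : t3expr :=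
  match t with
  | TT a b => t_append (D a) b
  | TAdd s u => T3Add (t_Dl D s) (t_Dl D u)
  | TScale z s => T3Scale z (t_Dl D s)
  end.
Fixpoint t_Dr (D : fexpr -> texpr) (t : texpr) : t3expr :=
  match t with
  | TT a b => t_prepend a (D b)
  | TAdd s u => T3Add (t_Dr D s) (t_Dr D u)
  | TScale z s => T3Scale z (t_Dr D s)
  end.
Fixpoint t_epsl (e : fexpr -> k) (t : texpr) : fexpr :=
  match t with
  | TT a b => FMul (FC (e a)) b
  | TAdd s u => FAdd (t_epsl e s) (t_epsl e u)
  | TScale z s => FMul (FC z) (t_epsl e s)
  end.
Fixpoint t_epsr (e : fexpr -> k) (t : texpr) : fexpr :=
  match t with
  | TT a b => FMul (FC (e b)) a
  | TAdd s u => FAdd (t_epsr e s) (t_epsr e u)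
  | TScale z s => FMul (FC z) (t_epsr e s)
  end.

Definition is_bialgebra (eA : fexpr -> fexpr -> Prop)
    (D : fexpr -> texpr) (e : fexpr -> k) : Prop :=
  (forall a b, eA a b -> t_eqv eA (D a) (D b)) /\
  (forall x, t_eqv eA (D (FC x)) (TScale x tone)) /\
  (forall a b, t_eqv eA (D (FAdd a b)) (TAdd (D a) (D b))) /\
  (forall a b, t_eqv eA (D (FMul a b)) (tmul (D a) (D b))) /\
  (forall a b, eA a b -> e a = e b) /\
  (forall x, e (FC x) = x) /\
  (forall a b, e (FAdd a b) = e a + e b) /\
  (forall a b, e (FMul a b) = e a * e b) /\
  (forall a, t3_eqv eA (t_Dl D (D a)) (t_Dr D (D a))) /\
  (forall a, eA (t_epsl e (D a)) a /\ eA (t_epsr e (D a)) a).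

Definition gens_grouplike (eA : fexpr -> fexpr -> Prop)
    (D : fexpr -> texpr) (e : fexpr -> k) : Prop :=
  forall x : X, t_eqv eA (D (FV x)) (TT (FV x) (FV x)) /\ e (FV x) = 1.

End Presented.

Arguments FC {k X} _.
Arguments FV {k X} _.
Arguments FAdd {k X} _ _.
Arguments FMul {k X} _ _.
Arguments TT {k X} _ _.

Definition alg_hom (k : fieldType) (X Y : Type)
    (eA : fexpr k X -> fexpr k X -> Prop) (eB : fexpr k Y -> fexpr k Y -> Prop)
    (phi : fexpr k X -> fexpr k Y) : Prop :=
  [/\ (forall a b, eA a b -> eB (phi a) (phi b)),
      (forall x, eB (phi (FC x)) (FC x)),
      (forall a b, eB (phi (FAdd a b)) (FAdd (phi a) (phi b))) &
      (forall a b, eB (phi (FMul a b)) (FMul (phi a) (phi b)))].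

Section Relations.
Variables (k : fieldType) (I : finType) (m : I -> I -> option nat).

Inductive nc_rel : fexpr k I -> fexpr k I -> Prop :=
 | ncr_braid i j n : i != j -> m i j = Some n ->
     nc_rel (braidw (FV i) (FV j) n) (braidw (FV j) (FV i) n)
 | ncr_nil i n : m i i = Some n -> nc_rel (fpow (FV i) n) (FC 0).

(* NC~(M): generators Some i = T_i and None = T_infinity *)
Inductive nct_rel : fexpr k (option I) -> fexpr k (option I) -> Prop :=
 | nctr_braid i j n : i != j -> m i j = Some n ->
     nct_rel (braidw (FV (Some i)) (FV (Some j)) n)
             (braidw (FV (Some j)) (FV (Some i)) n)
 | nctr_pow i n : m i i = Some n -> nct_rel (fpow (FV (Some i)) n) (FV None)
 | nctr_left i : nct_rel (FMul (FV (Some i)) (FV None)) (FV None)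
 | nctr_right i : nct_rel (FMul (FV None) (FV (Some i))) (FV None)
 | nctr_sq : nct_rel (FMul (FV None) (FV None)) (FV None).

Definition NC_eqv := alg_eqv nc_rel.
Definition NCt_eqv := alg_eqv nct_rel.
Definition Tinf : fexpr k (option I) := FV None.

End Relations.
Arguments NC_eqv {k I} m _ _.
Arguments NCt_eqv {k I} m _ _.
Arguments Tinf k I : clear implicits.

(* Since T_inf absorbs every generator on both sides (and itself), every
   monomial containing T_inf is equal to T_inf, so k T_inf is a two-sided
   ideal; killing T_inf turns the relation T_i^{m_ii} = T_inf into
   T_i^{m_ii} = 0, giving NC(M).  For the kernel, every element of NC~(M)
   differs from the lift of its image by a multiple of T_inf, and the lift
   respects the relations of NC(M) modulo k T_inf.
   The bialgebra structure is the one of the free algebra k<X> in which all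
   generators are grouplike; it descends to NC~(M) because every relation of
   NC~(M) equates two monomials, and monomials in grouplikes are grouplike.
   Coassociativity and the counit axioms hold because D a is a linear
   combination of tensors w (x) w with w grouplike.  Uniqueness holds because
   the generators generate the algebra. *)
From mathcomp Require Import all_boot all_order all_algebra.
From Stdlib Require Import Setoid Morphisms.
Set Implicit Arguments. Unset Strict Implicit. Unset Printing Implicit Defensive.
Import GRing.Theory.
Local Open Scope ring_scope.

#[export] Hint Resolve ae_refl te_refl t3e_refl : core.

Section PresentedAlgebra.
Variables (k : fieldType) (X : Type) (R : fexpr k X -> fexpr k X -> Prop).
Local Notation E := (alg_eqv R).

#[export] Instance alg_eqv_Equivalence : Equivalence E.
Proof. split; [exact: ae_refl | exact: ae_sym | exact: ae_trans]. Qed.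
#[export] Instance FAdd_Proper : Proper (E ==> E ==> E) FAdd.
Proof. by move=> ? ? ? ? ? ?; apply: ae_add. Qed.
#[export] Instance FMul_Proper : Proper (E ==> E ==> E) FMul.
Proof. by move=> ? ? ? ? ? ?; apply: ae_mul. Qed.

Lemma faddr0 a : E (FAdd a (FC 0)) a.
Proof. setoid_rewrite ae_addC; exact: ae_add0. Qed.

Lemma fmul0r a : E (FMul (FC 0) a) (FC 0).
Proof.
have twice : E (FMul (FC 0) a) (FAdd (FMul (FC 0) a) (FMul (FC 0) a)).
  by setoid_rewrite <- ae_mulDl; setoid_rewrite <- ae_Cadd; rewrite addr0.
transitivity (FAdd (FAdd (FMul (FC (-1)) (FMul (FC 0) a)) (FMul (FC 0) a))
                   (FMul (FC 0) a)).
  by setoid_rewrite ae_addN; symmetry; apply: ae_add0.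
by setoid_rewrite ae_addA; setoid_rewrite <- twice; apply: ae_addN.
Qed.

Lemma fmulr0 a : E (FMul a (FC 0)) (FC 0).
Proof. setoid_rewrite <- ae_Ccomm; exact: fmul0r. Qed.

Lemma fscaleA c d a : E (FMul (FC c) (FMul (FC d) a)) (FMul (FC (c * d)) a).
Proof. by setoid_rewrite <- ae_mulA; setoid_rewrite <- ae_Cmul. Qed.

Lemma fmulCA a c b : E (FMul a (FMul (FC c) b)) (FMul (FC c) (FMul a b)).
Proof.
setoid_rewrite <- ae_mulA; apply: ae_mul; last reflexivity.
symmetry; exact: ae_Ccomm.
Qed.

Lemma fscaleDl c d a :
  E (FAdd (FMul (FC c) a) (FMul (FC d) a)) (FMul (FC (c + d)) a).
Proof. by setoid_rewrite <- ae_mulDl; setoid_rewrite <- ae_Cadd. Qed.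

Lemma faddACA a b c d :
  E (FAdd (FAdd a b) (FAdd c d)) (FAdd (FAdd a c) (FAdd b d)).
Proof.
setoid_rewrite ae_addA; apply: ae_add; first reflexivity.
by setoid_rewrite <- ae_addA; setoid_rewrite (ae_addC R b c).
Qed.

Lemma fmulDD a z b z' :
  E (FMul (FAdd a z) (FAdd b z'))
    (FAdd (FMul a b) (FAdd (FMul a z') (FMul z (FAdd b z')))).
Proof. by setoid_rewrite ae_mulDl; setoid_rewrite ae_mulDr; apply: ae_addA. Qed.

Lemma fscaleMM x y a c :
  E (FMul (FC (x * y)) (FMul a c)) (FMul (FMul (FC x) a) (FMul (FC y) c)).
Proof. by rewrite ae_mulA fmulCA fscaleA. Qed.

End PresentedAlgebra.

Section AbsorbingGenerator.
Variables (k : fieldType) (X : Type) (R : fexpr k X -> fexpr k X -> Prop).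
Variable t : X.
Local Notation E := (alg_eqv R).
Local Notation T := (FV t : fexpr k X).

Hypothesis absorb_l : forall x, E (FMul (FV x) T) T.
Hypothesis absorb_r : forall x, E (FMul T (FV x)) T.

Definition in_line (z : fexpr k X) := exists c, E z (FMul (FC c) T).

Lemma in_line_mulT a : in_line (FMul a T).
Proof.
elim: a => [c|x|a [c1 h1] b [c2 h2]|a [c1 h1] b [c2 h2]].
- by exists c.
- by exists 1; rewrite absorb_l; symmetry; apply: ae_mul1l.
- by exists (c1 + c2); setoid_rewrite ae_mulDl; rewrite h1 h2; apply: fscaleDl.
- exists (c2 * c1); setoid_rewrite ae_mulA; rewrite h2.
  by setoid_rewrite fmulCA; rewrite h1; apply: fscaleA.
Qed.

Lemma in_line_Tmul a : in_line (FMul T a).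
Proof.
elim: a => [c|x|a [c1 h1] b [c2 h2]|a [c1 h1] b [c2 h2]].
- by exists c; symmetry; apply: ae_Ccomm.
- by exists 1; rewrite absorb_r; symmetry; apply: ae_mul1l.
- by exists (c1 + c2); setoid_rewrite ae_mulDr; rewrite h1 h2; apply: fscaleDl.
- exists (c1 * c2); setoid_rewrite <- ae_mulA; rewrite h1.
  by setoid_rewrite ae_mulA; rewrite h2; apply: fscaleA.
Qed.

Lemma in_line0 : in_line (FC 0).
Proof. by exists 0; symmetry; apply: fmul0r. Qed.

Lemma in_lineT : in_line T.
Proof. by exists 1; symmetry; apply: ae_mul1l. Qed.

Lemma in_lineD z z' : in_line z -> in_line z' -> in_line (FAdd z z').
Proof. by move=> [c hc] [c' hc']; exists (c + c'); rewrite hc hc'; apply: fscaleDl. Qed.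

Lemma in_lineMl a z : in_line z -> in_line (FMul a z).
Proof.
move=> [c hc]; have [d hd] := in_line_mulT a; exists (c * d).
by rewrite hc; setoid_rewrite fmulCA; rewrite hd; apply: fscaleA.
Qed.

Lemma in_lineMr z a : in_line z -> in_line (FMul z a).
Proof.
move=> [c hc]; have [d hd] := in_line_Tmul a; exists (c * d).
by rewrite hc; setoid_rewrite ae_mulA; rewrite hd; apply: fscaleA.
Qed.

Lemma in_line_eqv z z' : E z z' -> in_line z' -> in_line z.
Proof. by move=> hz [c hc]; exists c; rewrite hz. Qed.

End AbsorbingGenerator.

Section Quotient.
Variables (k : fieldType) (I : finType) (m : I -> I -> option nat).
Local Notation E := (NCt_eqv m).
Local Notation EN := (NC_eqv m).
Local Notation span := (@in_line k (option I) (@nct_rel k I m) None).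

Lemma Tinf_absorb_l (x : option I) :
  E (FMul (FV x) (Tinf k I)) (Tinf k I).
Proof. by apply: ae_rel; case: x => [i|]; constructor. Qed.

Lemma Tinf_absorb_r (x : option I) :
  E (FMul (Tinf k I) (FV x)) (Tinf k I).
Proof. by apply: ae_rel; case: x => [i|]; constructor. Qed.

Local Notation span_mulr := (in_lineMr Tinf_absorb_r).
Local Notation span_mull := (in_lineMl Tinf_absorb_l).

Fixpoint kill_Tinf (a : fexpr k (option I)) : fexpr k I :=
  match a with
  | FC c => FC c
  | FV (Some i) => FV i
  | FV None => FC 0
  | FAdd a b => FAdd (kill_Tinf a) (kill_Tinf b)
  | FMul a b => FMul (kill_Tinf a) (kill_Tinf b)
  end.

Fixpoint lift_NC (b : fexpr k I) : fexpr k (option I) :=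
  match b with
  | FC c => FC c
  | FV i => FV (Some i)
  | FAdd a b => FAdd (lift_NC a) (lift_NC b)
  | FMul a b => FMul (lift_NC a) (lift_NC b)
  end.

Lemma kill_Tinf_braidw a b n :
  kill_Tinf (braidw a b n) = braidw (kill_Tinf a) (kill_Tinf b) n.
Proof. by elim: n a b => //= n IH a b; rewrite IH. Qed.

Lemma kill_Tinf_fpow a n : kill_Tinf (fpow a n) = fpow (kill_Tinf a) n.
Proof. by elim: n => //= n ->. Qed.

Lemma lift_NC_braidw a b n :
  lift_NC (braidw a b n) = braidw (lift_NC a) (lift_NC b) n.
Proof. by elim: n a b => //= n IH a b; rewrite IH. Qed.

Lemma lift_NC_fpow a n : lift_NC (fpow a n) = fpow (lift_NC a) n.
Proof. by elim: n => //= n ->. Qed.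

Lemma lift_NCK : cancel lift_NC kill_Tinf.
Proof. by elim=> //= a -> b ->. Qed.

Lemma kill_Tinf_eqv a b : E a b -> EN (kill_Tinf a) (kill_Tinf b).
Proof.
elim=> /=; try (by constructor); try (by econstructor; eauto).
move=> {}a {}b [i j n ij mij|i n mii|i|i|].
- by rewrite !kill_Tinf_braidw; apply: ae_rel; apply: ncr_braid.
- by rewrite kill_Tinf_fpow; apply: ae_rel; apply: ncr_nil.
- exact: fmulr0.
- exact: fmul0r.
- exact: fmul0r.
Qed.

Lemma kill_Tinf_alg_hom : alg_hom E EN kill_Tinf.
Proof. by split=> *; [apply: kill_Tinf_eqv | reflexivity ..]. Qed.

Lemma lift_kill_Tinf_mod a :
  exists2 z, span z & E a (FAdd (lift_NC (kill_Tinf a)) z).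
Proof.
elim: a => [c|[i|]|a [z hz ha] b [z' hz' hb]|a [z hz ha] b [z' hz' hb]] /=.
- by exists (FC 0); [exact: in_line0 | rewrite faddr0].
- by exists (FC 0); [exact: in_line0 | rewrite faddr0].
- by exists (Tinf k I); [exact: in_lineT | symmetry; apply: ae_add0].
- exists (FAdd z z'); first exact: in_lineD.
  exact: ae_trans (ae_add ha hb) (faddACA _ _ _ _ _).
- exists (FAdd (FMul (lift_NC (kill_Tinf a)) z')
               (FMul z (FAdd (lift_NC (kill_Tinf b)) z'))).
    by apply: in_lineD; [exact: span_mull | exact: span_mulr].
  exact: ae_trans (ae_mul ha hb) (fmulDD _ _ _ _ _).
Qed.

Lemma lift_NC_eqv_mod b b' :
  EN b b' -> exists2 z, span z & E (lift_NC b) (FAdd (lift_NC b') z).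
Proof.
elim=> {b b'} /=; try by (move=> *; exists (FC 0);
                           [exact: in_line0 | rewrite faddr0; constructor]).
- move=> b b' [i j n ij mij|i n mii].
  + exists (FC 0); first exact: in_line0.
    by rewrite faddr0 !lift_NC_braidw; apply: ae_rel; apply: nctr_braid.
  + exists (Tinf k I); first exact: in_lineT.
    rewrite lift_NC_fpow ae_add0; apply: ae_rel; exact: nctr_pow.
- move=> a b _ [z hz hab]; exists (FMul (FC (-1)) z); first exact: span_mull.
  rewrite hab; symmetry; setoid_rewrite ae_addA; setoid_rewrite (ae_addC _ z).
  by setoid_rewrite ae_addN; apply: faddr0.
- move=> a b c _ [z hz hab] _ [z' hz' hbc]; exists (FAdd z' z).
    exact: in_lineD.
  by rewrite hab hbc; apply: ae_addA.
- move=> a a' b b' _ [z hz ha] _ [z' hz' hb]; exists (FAdd z z').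
    exact: in_lineD.
  by rewrite ha hb; apply: faddACA.
- move=> a a' b b' _ [z hz ha] _ [z' hz' hb].
  exists (FAdd (FMul (lift_NC a') z') (FMul z (FAdd (lift_NC b') z'))).
    by apply: in_lineD; [exact: span_mull | exact: span_mulr].
  by rewrite ha hb; apply: fmulDD.
Qed.

Lemma kill_TinfP a :
  EN (kill_Tinf a) (FC 0) <-> exists c, E a (FMul (FC c) (Tinf k I)).
Proof.
split=> [ha | [c hc]].
- have [z hz hlift] := lift_NC_eqv_mod ha.
  have [z' hz' ha'] := lift_kill_Tinf_mod a.
  apply: in_line_eqv (in_lineD hz hz').
  by rewrite ha' hlift ae_add0.
- by rewrite (kill_Tinf_eqv hc) /=; apply: fmulr0.
Qed.

End Quotient.

Section TensorSquare.
Variables (k : fieldType) (X : Type) (R : fexpr k X -> fexpr k X -> Prop).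
Local Notation E := (alg_eqv R).
Local Notation TE := (t_eqv E).

#[export] Instance t_eqv_Equivalence : Equivalence TE.
Proof. split; [exact: te_refl | exact: te_sym | exact: te_trans]. Qed.
#[export] Instance TAdd_Proper : Proper (TE ==> TE ==> TE) (@TAdd k X).
Proof. by move=> ? ? ? ? ? ?; apply: te_add. Qed.
#[export] Instance TScale_Proper c : Proper (TE ==> TE) (@TScale k X c).
Proof. by move=> ? ? ?; apply: te_scale. Qed.
#[export] Instance TT_Proper : Proper (E ==> E ==> TE) (@TT k X).
Proof. by move=> ? ? ? ? ? ?; apply: te_TT. Qed.

Lemma taddACA s t u v :
  TE (TAdd (TAdd s t) (TAdd u v)) (TAdd (TAdd s u) (TAdd t v)).
Proof.
setoid_rewrite te_addA; apply: te_add; first reflexivity.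
by setoid_rewrite <- te_addA; setoid_rewrite (te_addC E t u).
Qed.

Lemma tscale0_eq s t : TE (TScale 0 s) (TScale 0 t).
Proof. by rewrite -(te_add0 _ t (TScale 0 s)) te_addC te_add0. Qed.

Lemma tscaleC x y s : TE (TScale x (TScale y s)) (TScale y (TScale x s)).
Proof. by rewrite !te_scaleM mulrC. Qed.

Lemma tmul_pure_eqv_l a a' b b' t : E a a' -> E b b' ->
  TE (tmul_pure a b t) (tmul_pure a' b' t).
Proof.
move=> ha hb; elim: t => [c d|s IHs u IHu|c s IHs] /=.
- by rewrite ha hb.
- exact: te_add.
- exact: te_scale.
Qed.

Lemma tmul_pure_eqv_r a b t t' : TE t t' -> TE (tmul_pure a b t) (tmul_pure a b t').
Proof.
elim=> /=; try (by constructor); try (by econstructor; eauto).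
- by move=> c c' d d' -> ->.
- by move=> a1 a2 c; rewrite -te_linDl ae_mulDr.
- by move=> c b1 b2; rewrite -te_linDr ae_mulDr.
- by move=> c x y; rewrite -te_linZl fmulCA.
- by move=> c x y; rewrite -te_linZr fmulCA.
Qed.

Lemma tmul_pureDl a1 a2 b t :
  TE (tmul_pure (FAdd a1 a2) b t) (TAdd (tmul_pure a1 b t) (tmul_pure a2 b t)).
Proof.
elim: t => [c d|s IHs u IHu|c s IHs] /=.
- by rewrite -te_linDl ae_mulDl.
- by rewrite IHs IHu; apply: taddACA.
- by rewrite IHs te_scaleDr.
Qed.

Lemma tmul_pureDr a b1 b2 t :
  TE (tmul_pure a (FAdd b1 b2) t) (TAdd (tmul_pure a b1 t) (tmul_pure a b2 t)).
Proof.
elim: t => [c d|s IHs u IHu|c s IHs] /=.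
- by rewrite -te_linDr ae_mulDl.
- by rewrite IHs IHu; apply: taddACA.
- by rewrite IHs te_scaleDr.
Qed.

Lemma tmul_pureZl c a b t :
  TE (tmul_pure (FMul (FC c) a) b t) (TScale c (tmul_pure a b t)).
Proof.
elim: t => [c' d|s IHs u IHu|c' s IHs] /=.
- by rewrite -te_linZl ae_mulA.
- by rewrite IHs IHu te_scaleDr.
- by rewrite IHs; apply: tscaleC.
Qed.

Lemma tmul_pureZr c a b t :
  TE (tmul_pure a (FMul (FC c) b) t) (TScale c (tmul_pure a b t)).
Proof.
elim: t => [c' d|s IHs u IHu|c' s IHs] /=.
- by rewrite -te_linZr ae_mulA.
- by rewrite IHs IHu te_scaleDr.
- by rewrite IHs; apply: tscaleC.
Qed.

Lemma tmul_eqv_r s t t' : TE t t' -> TE (tmul s t) (tmul s t').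
Proof.
move=> ht; elim: s => [a b|s1 IH1 s2 IH2|c s IHs] /=.
- exact: tmul_pure_eqv_r.
- exact: te_add.
- exact: te_scale.
Qed.

Lemma tmul_eqv_l s s' t : TE s s' -> TE (tmul s t) (tmul s' t).
Proof.
elim=> /=; try (by constructor); try (by econstructor; eauto).
- by move=> *; apply: tmul_pure_eqv_l.
- by move=> *; apply: tmul_pureDl.
- by move=> *; apply: tmul_pureDr.
- by move=> *; apply: tmul_pureZl.
- by move=> *; apply: tmul_pureZr.
Qed.

#[export] Instance tmul_Proper : Proper (TE ==> TE ==> TE) (@tmul k X).
Proof. by move=> s s' hs t t' ht; rewrite (tmul_eqv_l t hs) tmul_eqv_r. Qed.

Lemma tmulA s t u : TE (tmul (tmul s t) u) (tmul s (tmul t u)).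
Proof.
elim: s => [a b|s1 IH1 s2 IH2|c s IHs] /=; [|exact: te_add|exact: te_scale].
elim: t => [c1 d|s1 IH1 s2 IH2|c1 s IHs] /=; [|exact: te_add|exact: te_scale].
elim: u => [e f|s1 IH1 s2 IH2|c2 s IHs] /=; [|exact: te_add|exact: te_scale].
by rewrite !ae_mulA.
Qed.

Lemma tmul_pure11 t : TE (tmul_pure (FC 1) (FC 1) t) t.
Proof.
elim: t => [c d|s IHs u IHu|c s IHs] /=; [|exact: te_add|exact: te_scale].
by rewrite !ae_mul1l.
Qed.

Lemma tmult_scale1 x t : TE (tmul t (TScale x (tone k X))) (TScale x t).
Proof.
elim: t => [c d|s IHs u IHu|c s IHs] /=.
- by rewrite !ae_mul1r.
- by rewrite IHs IHu te_scaleDr.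
- by rewrite IHs; apply: tscaleC.
Qed.

Lemma tmulDr s t u : TE (tmul s (TAdd t u)) (TAdd (tmul s t) (tmul s u)).
Proof.
elim: s => [a b|s1 IH1 s2 IH2|c s IHs] //=.
- by rewrite IH1 IH2; apply: taddACA.
- by rewrite IHs te_scaleDr.
Qed.

End TensorSquare.

Section GrouplikeBialgebra.
Variables (k : fieldType) (X : Type) (R : fexpr k X -> fexpr k X -> Prop).
Local Notation E := (alg_eqv R).
Local Notation TE := (t_eqv E).
Local Notation T3E := (t3_eqv E).

Fixpoint Dgl (a : fexpr k X) : texpr k X :=
  match a with
  | FC c => TScale c (tone k X)
  | FV x => TT (FV x) (FV x)
  | FAdd a b => TAdd (Dgl a) (Dgl b)
  | FMul a b => tmul (Dgl a) (Dgl b)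
  end.

Fixpoint epsgl (a : fexpr k X) : k :=
  match a with
  | FC c => c
  | FV _ => 1
  | FAdd a b => epsgl a + epsgl b
  | FMul a b => epsgl a * epsgl b
  end.

Definition grouplike a := TE (Dgl a) (TT a a).

Lemma grouplikeV x : grouplike (FV x).
Proof. by rewrite /grouplike. Qed.

Lemma grouplike1 : grouplike (FC 1).
Proof. exact: te_scale1. Qed.

Lemma grouplikeM a b : grouplike a -> grouplike b -> grouplike (FMul a b).
Proof. by rewrite /grouplike /= => ha hb; rewrite ha hb. Qed.

Lemma grouplike_braidw a b n :
  grouplike a -> grouplike b -> grouplike (braidw a b n).
Proof.
elim: n a b => [|n IH] a b ha hb /=; first exact: grouplike1.
by apply: grouplikeM => //; apply: IH.
Qed.

Lemma grouplike_fpow a n : grouplike a -> grouplike (fpow a n).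
Proof.
by elim: n => [|n IH] ha /=; [exact: grouplike1 | apply: grouplikeM; auto].
Qed.

Lemma epsgl_braidw a b n :
  epsgl a = 1 -> epsgl b = 1 -> epsgl (braidw a b n) = 1.
Proof. by elim: n a b => //= n IH a b ha hb; rewrite ha IH // mul1r. Qed.

Lemma epsgl_fpow a n : epsgl a = 1 -> epsgl (fpow a n) = 1.
Proof. by elim: n => //= n IH ha; rewrite ha IH // mul1r. Qed.

Section DescendsToQuotient.
Hypothesis Dgl_rel : forall a b, R a b -> TE (Dgl a) (Dgl b).
Hypothesis epsgl_rel : forall a b, R a b -> epsgl a = epsgl b.

Lemma Dgl_eqv a b : E a b -> TE (Dgl a) (Dgl b).
Proof.
elim=> {a b} /=; try (by constructor); try (by econstructor; eauto).
- by move=> a a' b b' _ ha _ hb; rewrite ha hb.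
- move=> a; rewrite tmul_pure11 -{2}(te_scale1 _ (Dgl a)) -te_scaleDl addNr.
  exact: tscale0_eq.
- by move=> *; apply: tmulA.
- by move=> a; rewrite tmul_pure11 te_scale1.
- by move=> a; rewrite tmult_scale1 te_scale1.
- by move=> *; apply: tmulDr.
- by move=> x y; rewrite te_scaleM ae_mul1l.
- by move=> x a; rewrite tmult_scale1 tmul_pure11.
Qed.

Lemma epsgl_eqv a b : E a b -> epsgl a = epsgl b.
Proof.
elim=> {a b} //=; try by move=> *; congruence.
- by move=> *; rewrite addrA.
- by move=> *; rewrite addrC.
- by move=> *; rewrite add0r.
- by move=> *; rewrite mulN1r addNr.
- by move=> *; rewrite mulrA.
- by move=> *; rewrite mul1r.
- by move=> *; rewrite mulr1.
- by move=> *; rewrite mulrDl.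
- by move=> *; rewrite mulrDr.
- by move=> *; rewrite mulrC.
Qed.

End DescendsToQuotient.

Inductive grouplike_span : texpr k X -> Prop :=
 | gs_TT w : grouplike w -> grouplike_span (TT w w)
 | gs_add s t : grouplike_span s -> grouplike_span t ->
     grouplike_span (TAdd s t)
 | gs_scale c s : grouplike_span s -> grouplike_span (TScale c s).

Lemma grouplike_span_tmul s t :
  grouplike_span s -> grouplike_span t -> grouplike_span (tmul s t).
Proof.
move=> hs ht; elim: hs => [w hw|s1 s2 _ h1 _ h2|c s1 _ h1] /=;
  [|exact: gs_add|exact: gs_scale].
elim: ht => [v hv|t1 t2 _ h1 _ h2|c t1 _ h1] /=;
  [|exact: gs_add|exact: gs_scale].
by apply: gs_TT; apply: grouplikeM.
Qed.

Lemma grouplike_span_Dgl a : grouplike_span (Dgl a).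
Proof.
elim: a => [c|x|a ha b hb|a ha b hb] /=.
- exact/gs_scale/gs_TT/grouplike1.
- exact/gs_TT/grouplikeV.
- exact: gs_add.
- exact: grouplike_span_tmul.
Qed.

Lemma t_append_eqv s s' c : TE s s' -> T3E (t_append s c) (t_append s' c).
Proof.
by elim=> /=; try (by constructor); econstructor; eauto.
Qed.

Lemma t_prepend_eqv s s' c : TE s s' -> T3E (t_prepend c s) (t_prepend c s').
Proof.
by elim=> /=; try (by constructor); econstructor; eauto.
Qed.

Lemma Dgl_coassoc a : T3E (t_Dl Dgl (Dgl a)) (t_Dr Dgl (Dgl a)).
Proof.
elim: (grouplike_span_Dgl a) => [w hw|s t _ h1 _ h2|c s _ h1] /=.
- apply: t3e_trans (t_append_eqv _ hw) _.
  by apply: t3e_sym; apply: t_prepend_eqv hw.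
- exact: t3e_add.
- exact: t3e_scale.
Qed.

Lemma t_epsl_tmul s t :
  E (t_epsl epsgl (tmul s t)) (FMul (t_epsl epsgl s) (t_epsl epsgl t)).
Proof.
elim: s => [a b|s1 IH1 s2 IH2|y s IHs] /=.
- elim: t => [c d|s1 IH1 s2 IH2|y s IHs] /=.
  + exact: fscaleMM.
  + by rewrite IH1 IH2 ae_mulDr.
  + by rewrite IHs fmulCA.
- by rewrite IH1 IH2 ae_mulDl.
- by rewrite IHs ae_mulA.
Qed.

Lemma t_epsr_tmul s t :
  E (t_epsr epsgl (tmul s t)) (FMul (t_epsr epsgl s) (t_epsr epsgl t)).
Proof.
elim: s => [a b|s1 IH1 s2 IH2|y s IHs] /=.
- elim: t => [c d|s1 IH1 s2 IH2|y s IHs] /=.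
  + exact: fscaleMM.
  + by rewrite IH1 IH2 ae_mulDr.
  + by rewrite IHs fmulCA.
- by rewrite IH1 IH2 ae_mulDl.
- by rewrite IHs ae_mulA.
Qed.

Lemma Dgl_counit a :
  E (t_epsl epsgl (Dgl a)) a /\ E (t_epsr epsgl (Dgl a)) a.
Proof.
elim: a => [c|x|a [ha1 ha2] b [hb1 hb2]|a [ha1 ha2] b [hb1 hb2]] /=.
- by split; rewrite ae_mul1l ae_mul1r.
- by split; apply: ae_mul1l.
- by split; apply: ae_add.
- by rewrite t_epsl_tmul t_epsr_tmul ha1 ha2 hb1 hb2.
Qed.

Lemma Dgl_bialgebra :
  (forall a b, R a b -> TE (Dgl a) (Dgl b)) ->
  (forall a b, R a b -> epsgl a = epsgl b) ->
  is_bialgebra E Dgl epsgl.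
Proof.
move=> DR eR; do !split=> //; try (by move=> *; reflexivity).
- exact: Dgl_eqv.
- exact: epsgl_eqv.
- exact: Dgl_coassoc.
- exact: (Dgl_counit a).1.
- exact: (Dgl_counit a).2.
Qed.

Lemma Dgl_gens_grouplike : gens_grouplike E Dgl epsgl.
Proof. by move=> x; split; first reflexivity. Qed.

Lemma bialgebra_gens_unique D D' e e' :
  is_bialgebra E D e -> gens_grouplike E D e ->
  is_bialgebra E D' e' -> gens_grouplike E D' e' ->
  forall a, TE (D a) (D' a) /\ e a = e' a.
Proof.
move=> [_ [DC [DA [DM [_ [eC [eA [eM _]]]]]]]] gl
       [_ [DC' [DA' [DM' [_ [eC' [eA' [eM' _]]]]]]]] gl'.
elim=> [c|x|a [ha1 ha2] b [hb1 hb2]|a [ha1 ha2] b [hb1 hb2]].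
- by rewrite DC DC' eC eC'.
- have [Dx ex] := gl x; have [D'x e'x] := gl' x.
  by rewrite Dx D'x ex e'x.
- by rewrite DA DA' eA eA' ha1 hb1 ha2 hb2.
- by rewrite DM DM' eM eM' ha1 hb1 ha2 hb2.
Qed.

End GrouplikeBialgebra.

Section NCtildeBialgebra.
Variables (k : fieldType) (I : finType) (m : I -> I -> option nat).
Local Notation nct := (@nct_rel k I m).
Local Notation TE := (t_eqv (NCt_eqv m)).

Lemma nct_rel_Dgl a b : nct a b -> TE (Dgl a) (Dgl b).
Proof.
have glV x := @grouplikeV k _ nct x.
case=> [i j n ij mij|i n mii|i|i|] /=;
  try by apply: te_TT; apply: ae_rel; constructor.
- rewrite (grouplike_braidw _ (glV _) (glV _)) (grouplike_braidw _ (glV _) (glV _)).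
  by apply: te_TT; apply: ae_rel; constructor.
- by rewrite (grouplike_fpow _ (glV _)); apply: te_TT; apply: ae_rel; constructor.
Qed.

Lemma nct_rel_epsgl a b : nct a b -> epsgl a = epsgl b.
Proof.
case=> [i j n _ _|i n _|i|i|] /=; try by rewrite mul1r.
- by rewrite !epsgl_braidw.
- by rewrite epsgl_fpow.
Qed.

End NCtildeBialgebra.

Theorem mainTheorem14 (k : fieldType) (I : finType) (m : I -> I -> option nat)
  (hM : gen_coxeter m) :
  (forall a : fexpr k (option I),
     (exists c : k, NCt_eqv m (FMul a (Tinf k I)) (FMul (FC c) (Tinf k I))) /\
     (exists c : k, NCt_eqv m (FMul (Tinf k I) a) (FMul (FC c) (Tinf k I))))
  /\
  (exists phi : fexpr k (option I) -> fexpr k I,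
     [/\ alg_hom (NCt_eqv m) (NC_eqv m) phi,
         (forall b, exists a, NC_eqv m (phi a) b) &
         (forall a, NC_eqv m (phi a) (FC 0) <->
                    exists c : k, NCt_eqv m a (FMul (FC c) (Tinf k I)))])
  /\
  (exists (D : fexpr k (option I) -> texpr k (option I))
          (e : fexpr k (option I) -> k),
     is_bialgebra (NCt_eqv m) D e /\ gens_grouplike (NCt_eqv m) D e)
  /\
  (forall (D D' : fexpr k (option I) -> texpr k (option I))
          (e e' : fexpr k (option I) -> k),
     is_bialgebra (NCt_eqv m) D e -> gens_grouplike (NCt_eqv m) D e ->
     is_bialgebra (NCt_eqv m) D' e' -> gens_grouplike (NCt_eqv m) D' e' ->
     forall a, t_eqv (NCt_eqv m) (D a) (D' a) /\ e a = e' a).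
Proof.
split.
  by move=> a; split; [apply: in_line_mulT (Tinf_absorb_l k m) a
                     | apply: in_line_Tmul (Tinf_absorb_r k m) a].
split.
  exists (@kill_Tinf k I); split; first exact: kill_Tinf_alg_hom.
    by move=> b; exists (lift_NC b); rewrite lift_NCK.
  exact: kill_TinfP.
split.
  exists (@Dgl k (option I)), (@epsgl k (option I)); split; last exact: Dgl_gens_grouplike.
  by apply: Dgl_bialgebra; [apply: nct_rel_Dgl | apply: nct_rel_epsgl].
exact: bialgebra_gens_unique.
Qed.
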